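(* Let $n\ge2$, let $0<f_1\le\dots\le f_n$ and $F_j=\sum_{i=1}^j f_i$. For $k\in\{1,\ldots,n-1\}$ let $X_k=1/(F_{n-k}+Z_k)^2$ where $Z_k\sim\Gamma\big(k,e\binom n2/k\big)$. Then for any $k\in\{1,\ldots,n-1\}$, $$\mathbb{E}[X_k]\le O\left(\frac{n^4F_{n-k}+kn^2}{n^4F_{n-k}^3+k^4F_{n-k}}\right).$$
   Context: $\Gamma(k,\lambda)$ denotes the distribution of the sum of $k$ independent exponential random variables with rate $\lambda$, i.e. density $\lambda^k x^{k-1}e^{-\lambda x}/(k-1)!$ on $x>0$. *)

From HB Require Import structures.
From mathcomp Require Import all_boot all_order all_algebra.
From mathcomp Require Import all_classical all_reals all_analysis.
Set Implicit Arguments. Unset Strict Implicit. Unset Printing Implicit Defensive.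
Import Order.TTheory GRing.Theory Num.Theory.
Local Open Scope ring_scope.
Local Open Scope classical_set_scope.

(* Density of Gamma(k, lam) (shape k, rate lam): sum of k i.i.d. Exp(lam). *)
Definition gamma_pdf {R : realType} (k : nat) (lam : R) (x : R) : R :=
  if 0 < x then lam ^+ k * x ^+ k.-1 * expR (- (lam * x)) / (k.-1)`!%:R else 0.

Definition gamma_expect {R : realType} (k : nat) (lam : R) (g : R -> R) : \bar R :=
  (\int[@lebesgue_measure R]_(x in [set: R]) (g x * gamma_pdf k lam x)%:E)%E.

Definition psum {R : realType} (f : nat -> R) (j : nat) : R :=
  \sum_(1 <= i < j.+1) f i.

From HB Require Import structures.
From mathcomp Require Import all_boot all_order all_algebra.
From mathcomp Require Import all_classical all_reals all_analysis.
From mathcomp Require Import measurable_realfun ring lra zify.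
Import Order.TTheory GRing.Theory Num.Theory.
Import numFieldNormedType.Exports.
Local Open Scope ring_scope.
Local Open Scope classical_set_scope.

(* For Z ~ Gamma(k, lam), three bounds on E[(F + Z)^-2] suffice. It is at most
   F^-2 because Z >= 0. It is at most lam / F, because the Gamma density is
   bounded by its rate lam and (F + x)^-2 integrates to 1 / F over x > 0. For
   k >= 3 it is at most E[Z^-2] = lam^2 / ((k - 1)(k - 2)). Since
   lam = e C(n, 2) / k <= e n^2 / (2 k), the first bound is within a factor 2
   of the target when k^2 <= n^2 F. Otherwise the denominator of the target is
   at most 2 k^4 F, and then the second bound (k <= 2) or the third (k >= 3)
   is within a factor 4 e or 3 e^2 of it. *)

Section improper_integrals.
Context {R : realType}.
Local Notation mu := (@lebesgue_measure R).
Implicit Types (F x : R).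

Lemma cvgy_le_inv (g : R -> R) c :
  (forall x, 0 < x -> 0 <= g x <= c / x) -> g x @[x --> +oo] --> 0.
Proof.
move=> gle; apply: (@squeeze_cvgr _ _ _ _ (cst 0) (fun x => c / x)).
- by near=> x; apply: gle; near: x; apply: nbhs_pinfty_gt; rewrite num_real.
- exact: cvg_cst.
- rewrite -(mulr0 c); apply: cvgM; first exact: cvg_cst.
  apply/gtr0_cvgV0; last exact: cvg_id.
  by near=> x; near: x; apply: nbhs_pinfty_gt; rewrite num_real.
Unshelve. all: by end_near.
Qed.

Lemma integral_itv_oy_antiderivative {f G : R -> R} {a l : R} :
  (forall x, a <= x -> 0 <= f x) -> {in `[a, +oo[, continuous f} ->
  (forall x, a <= x -> is_derive x 1 G (f x)) -> G x @[x --> +oo] --> l ->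
  (\int[mu]_(x in `]a, +oo[) (f x)%:E = (l - G a)%:E)%E.
Proof.
move=> f_ge0 cf dG Gl.
have dG' x : a <= x -> derivable G x 1 /\ G^`() x = f x.
  by move=> /dG [? Gx]; rewrite derive1E Gx.
rewrite integral_itv_obnd_cbnd; last first.
  apply/measurable_EFinP; apply: open_continuous_measurable_fun; first exact: interval_open.
  by move=> x; rewrite !inE /= !in_itv /= !andbT => /ltW ax; apply: cf; rewrite inE /= in_itv /= ax.
rewrite (ge0_continuous_FTC2y f_ge0 (continuous_in_subspaceT cf) Gl) ?EFinB //.
- by move=> x /ltW /dG' [].
- apply: cvg_at_right_filter; apply: differentiable_continuous; apply/derivable1_diffP.
  by case: (dG' a (lexx a)).
- by move=> x; rewrite in_itv /= andbT => /ltW /dG' [].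
Qed.

Lemma continuous_inv_sqr_shift F x :
  F + x != 0 -> {for x, continuous (fun z => 1 / (F + z) ^+ 2)}.
Proof.
move=> Fx; apply: cvgM; first exact: cvg_cst.
apply: cvgV; first by rewrite expf_eq0.
apply: (@cvg_comp _ _ _ (fun z => F + z) (fun y => y ^+ 2)); last exact: exprn_continuous.
by apply: cvgD; [exact: cvg_cst | exact: cvg_id].
Qed.

Lemma integral_inv_sqr_shift F :
  0 < F -> (\int[mu]_(x in `]0%R, +oo[) (1 / (F + x) ^+ 2)%:E = (F^-1)%:E)%E.
Proof.
move=> F0; have Fx0 x : 0 <= x -> 0 < F + x by move=> ?; rewrite ltr_wpDr.
have dG x : 0 <= x -> is_derive x 1 (fun z => - (F + z)^-1) (1 / (F + x) ^+ 2).
  move=> /Fx0 /lt0r_neq0 Fx; apply: is_derive_eq.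
  by rewrite add0r scaleNr opprK /GRing.scale /= mulr1 div1r.
have Gl : - (F + x)^-1 @[x --> +oo] --> 0.
  rewrite -oppr0; apply: cvgN; apply: (@cvgy_le_inv _ 1) => x x0.
  have Fx := Fx0 x (ltW x0).
  by rewrite invr_ge0 (ltW Fx) /= div1r lef_pV2 ?posrE // lerDr (ltW F0).
rewrite (integral_itv_oy_antiderivative _ _ dG Gl) /= ?addr0 ?sub0r ?opprK //.
- by move=> x /Fx0 /ltW Fx; rewrite divr_ge0 ?exprn_ge0.
- move=> x; rewrite inE /= in_itv /= andbT => /Fx0 /lt0r_neq0.
  exact: continuous_inv_sqr_shift.
Qed.

End improper_integrals.

Section integral_comparison.
Context {d : measure_display} {T : measurableType d} {R : realType}.
Variable mu : {measure set T -> \bar R}.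

Lemma ge0_le_integral_scale (D : set T) (f g : T -> R) (c : R) :
  measurable D -> 0 <= c -> measurable_fun D f -> measurable_fun D g ->
  (forall x, D x -> 0 <= f x) -> (forall x, D x -> 0 <= g x) ->
  (forall x, D x -> f x <= c * g x) ->
  (\int[mu]_(x in D) (f x)%:E <= c%:E * \int[mu]_(x in D) (g x)%:E)%E.
Proof.
move=> mD c0 mf mg f0 g0 fg.
have g0E x : D x -> (0 <= (g x)%:E)%E by move/g0; rewrite lee_fin.
have mgE : measurable_fun D (fun x => (g x)%:E) by exact/measurable_EFinP.
rewrite -(@ge0_integralZl_EFin _ _ _ mu D mD _ g0E mgE c c0).
apply: ge0_le_integral => //; first exact/measurable_EFinP.
by apply/measurable_EFinP; apply: measurable_funM => //; exact: measurable_cst.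
Qed.

End integral_comparison.

Section exp_partial_sum.
Context {R : realType}.
Implicit Types (k : nat) (y : R).

Definition exp_partial_sum k y : R := \sum_(i < k) y ^+ i / i`!%:R.

Lemma exp_partial_sumS0 k : exp_partial_sum k.+1 0 = 1.
Proof.
rewrite /exp_partial_sum big_ord_recl expr0 fact0 divr1 big1 ?addr0 // => i _.
by rewrite expr0n mul0r.
Qed.

Lemma pow_div_fact_le_expR k y : 0 <= y -> y ^+ k / k`!%:R <= expR y.
Proof.
move=> y0; case: k => [|k]; first by rewrite expr0 fact0 divr1 (le_trans _ (expR_ge1Dx y)) ?lerDl.
by rewrite (le_trans _ (expR_ge1Dxn k y0)) ?lerDr.
Qed.

Lemma is_derive_pow_div_fact k y :
  is_derive y 1 (fun z : R => z ^+ k.+1 / k.+1`!%:R) (y ^+ k / k`!%:R).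
Proof.
have -> : (fun z : R => z ^+ k.+1 / k.+1`!%:R) = k.+1`!%:R^-1 *: (@id R) ^+ k.+1.
  by apply: funext => z; rewrite /= mulrC exprfctE.
apply: is_derive_eq; rewrite /GRing.scale /= mulr1 factS natrM invfM.
field; rewrite pnatr_eq0 -lt0n fact_gt0 /=.
by rewrite addrC natr1 pnatr_eq0.
Qed.

Lemma is_derive_exp_partial_sum k y :
  is_derive y 1 (exp_partial_sum k.+1) (exp_partial_sum k y).
Proof.
elim: k y => [|k IH] y.
  have -> : exp_partial_sum 1 = cst 1.
    by apply: funext => z; rewrite /exp_partial_sum big_ord1 expr0 fact0 divr1.
  by rewrite /exp_partial_sum big_ord0; exact: is_derive_cst.
have -> : exp_partial_sum k.+2 = exp_partial_sum k.+1 + (fun z => z ^+ k.+1 / k.+1`!%:R).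
  by apply: funext => z; rewrite /exp_partial_sum /= big_ord_recr.
rewrite /exp_partial_sum big_ord_recr /=.
exact: is_deriveD (IH y) (is_derive_pow_div_fact k y).
Qed.

Lemma expRN_exp_partial_sum_le k y :
  0 < y -> expR (- y) * exp_partial_sum k y <= k%:R ^+ 2 / y.
Proof.
move=> y0; rewrite /exp_partial_sum mulr_sumr.
have term_le (i : 'I_k) : expR (- y) * (y ^+ i / i`!%:R) <= k%:R / y.
  have -> : y ^+ i / i`!%:R = y ^+ i.+1 / i.+1`!%:R * (i.+1%:R / y).
    rewrite factS natrM exprS; field.
    by rewrite gt_eqF //= gt_eqF ?ltr0n ?fact_gt0 //= addrC natr1 pnatr_eq0.
  have tail_le1 : expR (- y) * (y ^+ i.+1 / i.+1`!%:R) <= 1.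
    by rewrite expRN mulrC ler_pdivrMr ?expR_gt0 // mul1r pow_div_fact_le_expR ?ltW.
  have k_div_ge0 : 0 <= k%:R / y by rewrite divr_ge0 ?ler0n ?ltW.
  apply: le_trans (ler_piMl k_div_ge0 tail_le1).
  by rewrite mulrA ler_pM2l ?mulr_gt0 ?expR_gt0 ?divr_gt0 ?exprn_gt0 ?ltr0n ?fact_gt0 //
    ler_pM2r ?invr_gt0 // ler_nat.
have -> : k%:R ^+ 2 / y = \sum_(i < k) k%:R / y.
  by rewrite sumr_const card_ord -(mulr_natr (k%:R / y)) expr2 mulrAC.
by apply: ler_sum => i _; exact: term_le.
Qed.

End exp_partial_sum.

Section gamma_density.
Context {R : realType}.
Local Notation mu := (@lebesgue_measure R).
Implicit Types (k : nat) (lam F x : R).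

(* gamma_pdf without the restriction to x > 0: it is continuous on [0, +oo),
   as the fundamental theorem of calculus requires. *)
Definition gamma_density k lam x : R :=
  lam ^+ k * x ^+ k.-1 * expR (- (lam * x)) / (k.-1)`!%:R.

Definition gamma_tail k lam x : R := expR (- (lam * x)) * exp_partial_sum k (lam * x).

Lemma gamma_density_ge0 k lam x : 0 <= lam -> 0 <= x -> 0 <= gamma_density k lam x.
Proof.
by move=> l0 x0; rewrite /gamma_density !mulr_ge0 ?exprn_ge0 ?expR_ge0 ?invr_ge0.
Qed.

Lemma gamma_densityE k lam x :
  gamma_density k.+1 lam x = lam * ((lam * x) ^+ k / k`!%:R * expR (- (lam * x))).
Proof. by rewrite /gamma_density /= exprMn exprS; ring. Qed.

Lemma gamma_densitySS k lam x : gamma_density k.+3 lam x =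
  (lam * x) ^+ 2 / (k.+2%:R * k.+1%:R) * gamma_density k.+1 lam x.
Proof.
rewrite /gamma_density /= !factS !natrM !exprS; field.
by rewrite pnatr_eq0 -lt0n fact_gt0 /= !lt0r_neq0 // ltr_wpDr.
Qed.

Lemma gamma_density_le_rate k lam x : 0 <= lam -> 0 <= x -> gamma_density k.+1 lam x <= lam.
Proof.
move=> l0 x0; rewrite gamma_densityE ler_piMr //.
by rewrite expRN ler_pdivrMr ?expR_gt0 // mul1r pow_div_fact_le_expR ?mulr_ge0.
Qed.

Lemma continuous_gamma_density k lam : continuous (gamma_density k lam).
Proof.
move=> x; apply: cvgM; last exact: cvg_cst.
apply: cvgM; last first.
  apply: continuous_comp; last exact: continuous_expR.
  by apply: cvgN; apply: cvgM; [exact: cvg_cst | exact: cvg_id].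
by apply: cvgM; [exact: cvg_cst | exact: exprn_continuous].
Qed.

Lemma is_derive_gamma_tail k lam x :
  is_derive x 1 (gamma_tail k.+1 lam) (- gamma_density k.+1 lam x).
Proof.
have dlin : is_derive x 1 (fun z : R => lam * z) lam.
  by rewrite -[X in is_derive _ _ _ X]mulr1; exact: is_deriveZ.
have dexp : is_derive x 1 (fun z => expR (- (lam * z))) (expR (- (lam * x)) * - lam).
  exact: (is_derive1_comp (is_derive_expR _) (is_deriveN dlin)).
have dsum : is_derive x 1 (fun z => exp_partial_sum k.+1 (lam * z)) (exp_partial_sum k (lam * x) * lam).
  exact: (is_derive1_comp (is_derive_exp_partial_sum _ _) dlin).
have -> : gamma_tail k.+1 lam =
    (fun z => expR (- (lam * z))) * (fun z => exp_partial_sum k.+1 (lam * z)) by [].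
apply: is_derive_eq.
rewrite gamma_densityE /exp_partial_sum big_ord_recr /= /GRing.scale /=; ring.
Qed.

Lemma gamma_tailS0 k lam : gamma_tail k.+1 lam 0 = 1.
Proof. by rewrite /gamma_tail mulr0 oppr0 expR0 mul1r exp_partial_sumS0. Qed.

Lemma cvgy_gamma_tail k lam : 0 < lam -> gamma_tail k lam x @[x --> +oo] --> 0.
Proof.
move=> l0; apply: (@cvgy_le_inv _ _ (k%:R ^+ 2 / lam)) => x x0.
have y0 : 0 < lam * x by rewrite mulr_gt0.
have sum_ge0 : 0 <= exp_partial_sum k (lam * x).
  by rewrite sumr_ge0 // => i _; rewrite divr_ge0 ?exprn_ge0 ?ltW.
rewrite mulr_ge0 ?expR_ge0 //= -mulrA -invfM.
exact: expRN_exp_partial_sum_le.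
Qed.

Lemma integral_gamma_density k lam :
  0 < lam -> (\int[mu]_(x in `]0%R, +oo[) (gamma_density k.+1 lam x)%:E = 1)%E.
Proof.
move=> l0.
have dG x : 0 <= x -> is_derive x 1 (- gamma_tail k.+1 lam) (gamma_density k.+1 lam x).
  by move=> _; rewrite -[gamma_density _ _ _]opprK; exact: is_deriveN (is_derive_gamma_tail k lam x).
have Gl : (- gamma_tail k.+1 lam) x @[x --> +oo] --> 0.
  by rewrite -oppr0; apply: cvgN; exact: cvgy_gamma_tail.
rewrite (integral_itv_oy_antiderivative _ _ dG Gl); first congr (_%:E).
  have -> : (- gamma_tail k.+1 lam) 0 = - 1 by rewrite -(gamma_tailS0 k lam).
  by rewrite sub0r opprK.
- by move=> x; apply: gamma_density_ge0; exact: ltW.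
- by move=> x _; exact: continuous_gamma_density.
Qed.

Lemma gamma_expectE k lam (g : R -> R) : gamma_expect k lam g =
  (\int[mu]_(x in `]0%R, +oo[) (g x * gamma_density k lam x)%:E)%E.
Proof.
rewrite /gamma_expect [RHS]integral_mkcond; apply: eq_integral => x _.
rewrite /patch /gamma_pdf mem_setE /= in_itv /= andbT.
by case: ifP => _; rewrite ?mulr0.
Qed.

Lemma gamma_expect_inv_sqr_le k lam F c (h : R -> R) :
  0 < lam -> 0 < F -> 0 <= c ->
  {in `]0%R, +oo[, continuous h} -> (forall x, 0 < x -> 0 <= h x) ->
  (forall x, 0 < x -> 1 / (F + x) ^+ 2 * gamma_density k lam x <= c * h x) ->
  (gamma_expect k lam (fun z => (1 / (F + z) ^+ 2)%R)
    <= c%:E * \int[mu]_(x in `]0%R, +oo[) (h x)%:E)%E.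
Proof.
move=> l0 F0 c0 ch h0 le_h; rewrite gamma_expectE.
have itv0 x : `]0%R, +oo[ x -> 0 < x by rewrite /= in_itv /= andbT.
have open_itv := @interval_open R (BLeft 0) (BInfty _ false).
apply: ge0_le_integral_scale => //.
- apply: open_continuous_measurable_fun => // x /set_mem /itv0 x0.
  apply: cvgM; last exact: continuous_gamma_density.
  by apply: continuous_inv_sqr_shift; rewrite lt0r_neq0 // ltr_wpDr ?ltW.
- exact: open_continuous_measurable_fun.
- move=> x /itv0 x0.
  by rewrite mulr_ge0 ?gamma_density_ge0 ?divr_ge0 ?exprn_ge0 ?addr_ge0 ?(ltW l0) ?(ltW F0) ?(ltW x0).
- by move=> x /itv0; exact: h0.
- by move=> x /itv0; exact: le_h.
Qed.

Lemma gamma_expect_inv_sqr_le_inv_sqr k lam F : (0 < k)%N -> 0 < lam -> 0 < F ->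
  (gamma_expect k lam (fun z => (1 / (F + z) ^+ 2)%R) <= (1 / F ^+ 2)%:E)%E.
Proof.
case: k => // k _ l0 F0; rewrite -[X in (_ <= X)%E]mule1 -(integral_gamma_density k _ l0).
apply: gamma_expect_inv_sqr_le => //.
- by rewrite divr_ge0 ?exprn_ge0 ?ltW.
- by move=> x _; exact: continuous_gamma_density.
- by move=> x x0; rewrite gamma_density_ge0 ?ltW.
move=> x x0; apply: ler_wpM2r; first by rewrite gamma_density_ge0 ?ltW.
have Fx : 0 < F + x by rewrite ltr_wpDr ?ltW.
rewrite !div1r lef_pV2 ?posrE ?exprn_gt0 //.
by rewrite lerXn2r ?nnegrE ?(ltW F0) ?(ltW Fx) // lerDl (ltW x0).
Qed.

Lemma gamma_expect_inv_sqr_le_rate k lam F : (0 < k)%N -> 0 < lam -> 0 < F ->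
  (gamma_expect k lam (fun z => (1 / (F + z) ^+ 2)%R) <= (lam / F)%:E)%E.
Proof.
case: k => // k _ l0 F0; rewrite EFinM -(integral_inv_sqr_shift _ F0).
apply: gamma_expect_inv_sqr_le => //.
- exact: ltW.
- move=> x; rewrite inE /= in_itv /= andbT => x0.
  by apply: continuous_inv_sqr_shift; rewrite lt0r_neq0 // ltr_wpDr ?ltW.
- by move=> x x0; rewrite divr_ge0 ?exprn_ge0 // addr_ge0 ?ltW.
move=> x x0; rewrite mulrC; apply: ler_wpM2r.
  by rewrite divr_ge0 ?exprn_ge0 // addr_ge0 ?ltW.
by rewrite gamma_density_le_rate ?ltW.
Qed.

Lemma gamma_expect_inv_sqr_le_shape k lam F : (2 < k)%N -> 0 < lam -> 0 < F ->
  (gamma_expect k lam (fun z => (1 / (F + z) ^+ 2)%R)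
    <= (lam ^+ 2 / (k.-1%:R * k.-2%:R))%:E)%E.
Proof.
case: k => [|[|[|k]]] // _ l0 F0; rewrite -[X in (_ <= X)%E]mule1 -(integral_gamma_density k _ l0).
apply: gamma_expect_inv_sqr_le => //.
- by rewrite divr_ge0 ?exprn_ge0 ?mulr_ge0 ?ler0n ?ltW.
- by move=> x _; exact: continuous_gamma_density.
- by move=> x x0; rewrite gamma_density_ge0 ?ltW.
move=> x x0; have Fx : 0 < F + x by rewrite ltr_wpDr ?ltW.
have -> : 1 / (F + x) ^+ 2 * gamma_density k.+3 lam x =
    (x / (F + x)) ^+ 2 * (lam ^+ 2 / (k.+2%:R * k.+1%:R) * gamma_density k.+1 lam x).
  by rewrite gamma_densitySS expr_div_n exprMn; ring.
apply: ler_piMl; first by rewrite mulr_ge0 ?gamma_density_ge0 ?divr_ge0 ?exprn_ge0 ?mulr_ge0 ?ltW.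
by rewrite exprn_ile1 ?divr_ge0 ?(ltW x0) ?(ltW Fx) // ler_pdivrMr // mul1r lerDr (ltW F0).
Qed.

End gamma_density.

Section inv_sqr_rate.
Context {R : realFieldType}.
Implicit Types N K F : R.

Definition inv_sqr_rate N K F : R :=
  (N ^+ 4 * F + K * N ^+ 2) / (N ^+ 4 * F ^+ 3 + K ^+ 4 * F).

Lemma inv_sqr_rateE N K F : inv_sqr_rate N K F =
  N ^+ 2 * (N ^+ 2 * F + K) / (F * ((N ^+ 2 * F) ^+ 2 + (K ^+ 2) ^+ 2)).
Proof. by rewrite /inv_sqr_rate; congr (_ / _); ring. Qed.

Lemma inv_sqr_rate_ge0 N K F : 0 <= N -> 0 <= K -> 0 <= F -> 0 <= inv_sqr_rate N K F.
Proof. by move=> N0 K0 F0; rewrite divr_ge0 ?addr_ge0 ?mulr_ge0 ?exprn_ge0. Qed.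

(* With u = N^2 F and v = K^2, the rate is N^2 (u + K) / (F (u^2 + v^2)),
   and u^2 + v^2 <= 2 w^2. *)
Lemma le_inv_sqr_rate N K F w a : 0 < N -> 0 < K -> 0 < F ->
  N ^+ 2 * F <= w -> K ^+ 2 <= w -> 0 <= a -> a <= N ^+ 2 * F + K ->
  N ^+ 2 * a / (2 * F * w ^+ 2) <= inv_sqr_rate N K F.
Proof.
move=> N0 K0 F0 uw vw a0 a_le; rewrite inv_sqr_rateE.
have u0 : 0 < N ^+ 2 * F by rewrite mulr_gt0 ?exprn_gt0.
have v0 : 0 < K ^+ 2 by rewrite exprn_gt0.
have w0 : 0 < w by rewrite (lt_le_trans u0).
have uw2 : (N ^+ 2 * F) ^+ 2 <= w ^+ 2 by rewrite lerXn2r ?nnegrE ?(ltW u0) ?(ltW w0).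
have vw2 : (K ^+ 2) ^+ 2 <= w ^+ 2 by rewrite lerXn2r ?nnegrE ?(ltW v0) ?(ltW w0).
apply: (@le_trans _ _ (N ^+ 2 * (N ^+ 2 * F + K) / (2 * F * w ^+ 2))).
  by rewrite ler_pM2r ?invr_gt0 ?mulr_gt0 ?exprn_gt0 // ler_pM2l ?exprn_gt0.
rewrite ler_pM2l ?mulr_gt0 ?exprn_gt0 ?addr_gt0 // lef_pV2 ?posrE ?mulr_gt0 ?addr_gt0 ?exprn_gt0 //.
by rewrite -mulrA mulrCA ler_pM2l //; lra.
Qed.

Lemma le_inv_sqr_rate_inv_sqr N K F : 0 < N -> 0 < K -> 0 < F ->
  K ^+ 2 <= N ^+ 2 * F -> 1 / F ^+ 2 <= 2 * inv_sqr_rate N K F.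
Proof.
move=> N0 K0 F0 vu.
have -> : 1 / F ^+ 2 = 2 * (N ^+ 2 * (N ^+ 2 * F) / (2 * F * (N ^+ 2 * F) ^+ 2)).
  by field; rewrite !gt_eqF.
have u0 : 0 < N ^+ 2 * F by rewrite mulr_gt0 ?exprn_gt0.
rewrite ler_pM2l //; apply: le_inv_sqr_rate => //; first exact: ltW.
by rewrite lerDl ltW.
Qed.

Lemma le_inv_sqr_rate_quartic N K F : 0 < N -> 0 < K -> 0 < F ->
  N ^+ 2 * F <= K ^+ 2 -> N ^+ 4 / (2 * K ^+ 4) <= inv_sqr_rate N K F.
Proof.
move=> N0 K0 F0 uv.
have -> : N ^+ 4 / (2 * K ^+ 4) = N ^+ 2 * (N ^+ 2 * F) / (2 * F * (K ^+ 2) ^+ 2).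
  by field; rewrite !gt_eqF.
have u0 : 0 < N ^+ 2 * F by rewrite mulr_gt0 ?exprn_gt0.
apply: le_inv_sqr_rate => //; first exact: ltW.
by rewrite lerDl ltW.
Qed.

Lemma le_inv_sqr_rate_cubic N K F : 0 < N -> 0 < K -> 0 < F ->
  N ^+ 2 * F <= K ^+ 2 -> N ^+ 2 / (2 * K ^+ 3 * F) <= inv_sqr_rate N K F.
Proof.
move=> N0 K0 F0 uv.
have -> : N ^+ 2 / (2 * K ^+ 3 * F) = N ^+ 2 * K / (2 * F * (K ^+ 2) ^+ 2).
  by field; rewrite !gt_eqF.
have u0 : 0 < N ^+ 2 * F by rewrite mulr_gt0 ?exprn_gt0.
apply: le_inv_sqr_rate => //; first exact: ltW.
by rewrite lerDr ltW.
Qed.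

Lemma lam_div_le_inv_sqr_rate N K F E lam : 0 < N -> 0 < K -> 0 < F -> 0 <= E ->
  K <= 2 -> N ^+ 2 * F <= K ^+ 2 -> lam <= E * N ^+ 2 / (2 * K) ->
  lam / F <= 4 * E * inv_sqr_rate N K F.
Proof.
move=> N0 K0 F0 E0 K2 uv lam_le.
apply: (@le_trans _ _ (E * N ^+ 2 / (2 * K) / F)); first by rewrite ler_pM2r ?invr_gt0.
have -> : E * N ^+ 2 / (2 * K) / F = 4 * E * (K ^+ 2 / 4 * (N ^+ 2 / (2 * K ^+ 3 * F))).
  by field; rewrite !gt_eqF.
apply: ler_wpM2l; first by rewrite mulr_ge0.
apply: le_trans (le_inv_sqr_rate_cubic N K F N0 K0 F0 uv); apply: ler_piMl.
  by rewrite divr_ge0 ?mulr_ge0 ?exprn_ge0 ?ltW.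
have K20 : 0 <= K ^+ 2 by rewrite exprn_ge0 ?ltW.
by rewrite ler_pdivrMr // mul1r; nra.
Qed.

Lemma sqr_lam_div_le_inv_sqr_rate N K F E lam Q : 0 < N -> 0 < K -> 0 < F -> 0 <= E ->
  0 <= lam -> 0 < Q -> K ^+ 2 <= 6 * Q -> N ^+ 2 * F <= K ^+ 2 ->
  lam <= E * N ^+ 2 / (2 * K) -> lam ^+ 2 / Q <= 3 * E ^+ 2 * inv_sqr_rate N K F.
Proof.
move=> N0 K0 F0 E0 lam0 Q0 KQ uv lam_le.
apply: (@le_trans _ _ ((E * N ^+ 2 / (2 * K)) ^+ 2 / Q)).
  by rewrite ler_pM2r ?invr_gt0 // lerXn2r ?nnegrE ?(le_trans lam0).
have -> : (E * N ^+ 2 / (2 * K)) ^+ 2 / Q =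
    3 * E ^+ 2 * (K ^+ 2 / (6 * Q) * (N ^+ 4 / (2 * K ^+ 4))).
  by field; rewrite !gt_eqF.
apply: ler_wpM2l; first by rewrite mulr_ge0 ?exprn_ge0.
apply: le_trans (le_inv_sqr_rate_quartic N K F N0 K0 F0 uv); apply: ler_piMl.
  by rewrite divr_ge0 ?mulr_ge0 ?exprn_ge0 ?ltW.
by rewrite ler_pdivrMr ?mulr_gt0 // mul1r.
Qed.

End inv_sqr_rate.

Lemma double_bin2_leq n : (2 * 'C(n, 2) <= n ^ 2)%N.
Proof. rewrite bin2 -divn2; nia. Qed.

Lemma sqr_le_six_mul_pred2 k : (2 < k)%N -> (k ^ 2 <= 6 * (k.-1 * k.-2))%N.
Proof. by case: k => [|[|[|k]]] //= _; nia. Qed.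

Lemma psum_gt0 {R : realType} (f : nat -> R) j : (0 < j)%N -> 0 < f 1%N ->
  (forall i, (0 < i < j)%N -> f i <= f i.+1) -> 0 < psum f j.
Proof.
move=> j0 f1 fS.
have f_gt0 i : (0 < i <= j)%N -> 0 < f i.
  elim: i => [//|[//|i] IH] /andP[_ ij].
  by apply: lt_le_trans (IH _) (fS _ _); apply/andP; split => //; exact: ltnW.
rewrite /psum big_ltn ?ltnS // ltr_wpDr //.
rewrite big_nat_cond sumr_ge0 // => i /andP[/andP[i1 ij] _].
by rewrite ltW // f_gt0 // (ltn_trans _ i1) /= -ltnS.
Qed.

Lemma gamma_expect_inv_sqr_le_inv_sqr_rate {R : realType} (n k : nat) (F : R) :
  (2 <= n)%N -> (0 < k)%N -> 0 < F ->
  (gamma_expect k (expR 1 * 'C(n, 2)%:R / k%:R) (fun z => (1 / (F + z) ^+ 2)%R)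
    <= ((2 + 4 * expR 1 + 3 * expR 1 ^+ 2) * inv_sqr_rate n%:R k%:R F)%:E)%E.
Proof.
move=> n2 k0 F0.
set E := expR 1; set N := n%:R; set K := k%:R; set lam := E * _ / K.
set C := 2 + _ + _; set r := inv_sqr_rate N K F.
have E0 : 0 < E := expR_gt0 1.
have N0 : 0 < N by rewrite ltr0n; lia.
have K0 : 0 < K by rewrite ltr0n.
have lam0 : 0 < lam by rewrite divr_gt0 ?mulr_gt0 // ltr0n bin_gt0.
have lam_le : lam <= E * N ^+ 2 / (2 * K).
  have -> : E * N ^+ 2 / (2 * K) = E * (N ^+ 2 / 2) / K by field; rewrite gt_eqF.
  rewrite ler_pM2r ?invr_gt0 // ler_pM2l // ler_pdivlMr //.
  by rewrite -natrX -natrM ler_nat mulnC double_bin2_leq.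
have le_C c : c <= C -> ((c * r)%:E <= (C * r)%:E)%E.
  by move=> cC; rewrite lee_fin; apply: ler_wpM2r; rewrite // inv_sqr_rate_ge0 ?ltW.
have E2 : 0 <= E ^+ 2 := sqr_ge0 E.
have [vu|uv] := leP (K ^+ 2) (N ^+ 2 * F).
  apply: (le_trans (gamma_expect_inv_sqr_le_inv_sqr _ _ _ k0 lam0 F0)).
  apply: (le_trans _ (le_C 2 _)); last by rewrite /C; lra.
  by rewrite lee_fin le_inv_sqr_rate_inv_sqr.
have [k_le2|k_gt2] := leqP k 2.
  apply: (le_trans (gamma_expect_inv_sqr_le_rate _ _ _ k0 lam0 F0)).
  apply: (le_trans _ (le_C (4 * E) _)); last by rewrite /C; lra.
  rewrite lee_fin lam_div_le_inv_sqr_rate ?(ltW E0) ?(ltW uv) //.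
  by rewrite -(ler_nat R) in k_le2.
apply: (le_trans (gamma_expect_inv_sqr_le_shape _ _ _ k_gt2 lam0 F0)).
apply: (le_trans _ (le_C (3 * E ^+ 2) _)); last by rewrite /C; lra.
rewrite lee_fin sqr_lam_div_le_inv_sqr_rate ?(ltW E0) ?(ltW lam0) ?(ltW uv) //.
  by apply: mulr_gt0; rewrite ltr0n; lia.
by have := sqr_le_six_mul_pred2 _ k_gt2; rewrite -(ler_nat R) natrX !natrM.
Qed.

Theorem lemma14 (R : realType) :
  exists C : R, 0 < C /\
  forall (n : nat) (f : nat -> R),
    (2 <= n)%N ->
    0 < f 1%N ->
    (forall i : nat, (1 <= i)%N -> (i < n)%N -> f i <= f i.+1) ->
    forall k : nat, (1 <= k)%N -> (k <= n - 1)%N ->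
      let F := psum f (n - k) in
      let lam := expR 1 * ('C(n, 2))%:R / k%:R in
      (gamma_expect k lam (fun z => (1 / (F + z) ^+ 2)%R)
        <= (C * ((n%:R ^+ 4 * F + k%:R * n%:R ^+ 2)
                 / (n%:R ^+ 4 * F ^+ 3 + k%:R ^+ 4 * F)))%R%:E)%E.
Proof.
exists (2 + 4 * expR 1 + 3 * expR 1 ^+ 2); split.
  have := expR_gt0 (1 : R); have := sqr_ge0 (expR (1 : R)); lra.
move=> n f n2 f1 f_mono k k1 kn.
apply: gamma_expect_inv_sqr_le_inv_sqr_rate => //.
apply: psum_gt0 => //; first lia.
by move=> i /andP[i0 ik]; apply: f_mono => //; lia.
Qed.
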